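(* Let $p$ be an odd prime. Then, modulo $[p]^2$, $$\sum_{k=0}^{\frac{p-1}{2}} \begin{bmatrix}2k\\k\end{bmatrix}_{q^2}^3 \frac{q^{2k}}{(-q^2;q^2)_k^2\,(-q;q)_{2k}^2} \equiv \begin{cases} q^{\frac{p-1}{2}} \begin{bmatrix}\frac{p-1}{2}\\ \frac{p-1}{4}\end{bmatrix}_{q^4}^2 \dfrac{1}{(-q^2;q^2)_{\frac{p-1}{2}}^2}, & \text{if } p\equiv 1\pmod 4,\\[2mm] 0, & \text{otherwise.}\end{cases}$$
   Context: For an indeterminate $q$ and an integer $n\ge 0$: $(a;q)_0=1$ and $(a;q)_n=(1-a)(1-aq)\cdots(1-aq^{n-1})$. The $q$-binomial coefficient is $\begin{bmatrix}n\\k\end{bmatrix}_q=\frac{(q^{n-k+1};q)_k}{(q;q)_k}$ if $0\le k\le n$ and $0$ otherwise; if no base is indicated, the base is $q$. For a positive integer $p$, $[p]=\frac{1-q^p}{1-q}=1+q+\cdots+q^{p-1}$. For a prime $p$, $[p]$ is irreducible in $\mathbb{Q}[q]$; for rational functions $A,B$ of $q$ whose denominators are coprime to $[p]$, $A\equiv B\pmod{[p]^r}$ means that $A-B$, written in lowest terms, has numerator divisible by $[p]^r$ in $\mathbb{Q}[q]$. *)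

From HB Require Import structures.
From mathcomp Require Import all_boot all_order all_algebra.
Set Implicit Arguments. Unset Strict Implicit. Unset Printing Implicit Defensive.
Import Order.TTheory GRing.Theory Num.Theory.
Local Open Scope ring_scope.

Notation QF := {fraction {poly rat}}.

Definition qq : QF := tofrac ('X : {poly rat}).

Definition qpoch (a x : QF) (n : nat) : QF := \prod_(i < n) (1 - a * x ^+ i).

Definition qbin (x : QF) (n k : nat) : QF :=
  if (k <= n)%N then qpoch (x ^+ (n - k + 1)) x k / qpoch x x k else 0.

Definition qint (p : nat) : {poly rat} := \sum_(i < p) 'X^i.

(* A == B mod m^r for rational functions: A - B = N/D with m^r | N and D
   coprime to m (so denominators coprime to m; lowest-terms numerator
   divisible by m^r when m is irreducible). *)
Definition qcongr (m : {poly rat}) (r : nat) (A B : QF) : Prop :=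
  exists N D : {poly rat}, [/\ D != 0, coprimep D m, (m ^+ r %| N)%R &
    A - B = tofrac N / tofrac D].

(* Write [Q = q^2] and [n = (p - 1) / 2].  The ratio of consecutive summands on the
   left-hand side differs from the term ratio [rho(Q^n, Q^i)] of the terminating sum
   [T_n = \sum_k \prod_(i < k) rho(Q^n, Q^i)] by a multiple of
   [(q^(2n+1) - 1)^2 = (q^p - 1)^2], and all denominators involved are coprime to [[p]]
   (they are powers of [q] and factors [1 - q^j] with [j] even, [0 < j < 2p]); hence the
   sum is congruent to [T_n] modulo [[p]^2].  Creative telescoping gives a second-order
   recurrence for [T_n], so [T_n = 0] for odd [n] and
   [T_(2m) = Q^m ((Q; Q^2)_m / (Q^2; Q^2)_m)^2], which is the right-hand side. *)

From HB Require Import structures.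
From mathcomp Require Import all_boot all_order all_algebra.
From mathcomp Require Import ring zify.
Set Implicit Arguments. Unset Strict Implicit. Unset Printing Implicit Defensive.
Import Order.TTheory GRing.Theory Num.Theory.
Local Open Scope ring_scope.

Section TerminatingSum.
Variables (F : fieldType) (Q : F).
Hypothesis Qexp_inj : forall a b : nat, a != b -> Q ^+ a != Q ^+ b.

Definition term_ratio (x y : F) :=
  Q * (x - y) * (1 - Q * x * y) * (1 - Q * y ^+ 2)
  / (x * (1 - Q * y) ^+ 2 * (1 - Q ^+ 2 * y ^+ 2)).

Definition term n k := \prod_(i < k) term_ratio (Q ^+ n) (Q ^+ i).

Definition tsum n := \sum_(k < n.+1) term n k.

(* Zeilberger's certificate for the recurrence of [tsum]. *)
Definition certificate_ratio (x y : F) :=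
  Q ^+ 2 * x * (Q ^+ 3 * x ^+ 2 - 1) * (1 - y) ^+ 3 * (1 + y)
  / (y * (y - Q * x) * (y - Q ^+ 2 * x)).

Definition certificate n k := term n k * certificate_ratio (Q ^+ n) (Q ^+ k).

Lemma subr_Qexp_neq0 a b : a != b -> Q ^+ a - Q ^+ b != 0.
Proof. by move=> neq_ab; rewrite subr_eq0 Qexp_inj. Qed.

Lemma Q_neq0 : Q != 0.
Proof. by apply: contra_neq (Qexp_inj (a := 1) (b := 2) isT) => ->; rewrite !expr0n. Qed.

Lemma Qexp_neq0 n : Q ^+ n != 0.
Proof. by rewrite expf_neq0 // Q_neq0. Qed.

Ltac Qexp_neq := rewrite -?exprS -?exprD -?exprM;
  first [apply: subr_Qexp_neq0; lia | rewrite -[1](expr0 Q); apply: subr_Qexp_neq0; lia].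

Lemma termS n k : term n k.+1 = term n k * term_ratio (Q ^+ n) (Q ^+ k).
Proof. by rewrite /term big_ord_recr. Qed.

Lemma term_add2_mul n k :
  term n.+2 k * ((Q ^+ 2 * Q ^+ n - Q ^+ k) * (Q * Q ^+ n - Q ^+ k)
                 * (1 - Q * Q ^+ n) * (1 - Q ^+ 2 * Q ^+ n))
  = term n k * ((Q ^+ 2 * Q ^+ n - 1) * (Q * Q ^+ n - 1)
                * (1 - Q * Q ^+ n * Q ^+ k) * (1 - Q ^+ 2 * Q ^+ n * Q ^+ k)).
Proof.
elim: k => [|k IH]; first by rewrite /term !big_ord0 expr0; ring.
rewrite !termS (exprS Q k) (exprD Q 2 n).
have h1 : 1 - Q * Q ^+ k != 0 by Qexp_neq.
have h2 : 1 - Q ^+ 2 * Q ^+ k ^+ 2 != 0 by rewrite -exprM; Qexp_neq.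
move: IH h1 h2 (Qexp_neq0 n) Q_neq0.
set x := Q ^+ n; set y := Q ^+ k; set A := term n.+2 k; set B := term n k.
move=> /eqP IH h1 h2 hx hQ; rewrite -subr_eq0 in IH; apply/subr0_eq.
pose c := Q * (1 - Q ^+ 3 * x * y) * (1 - Q * y ^+ 2) * (x - y)
          / (x * (1 - Q * y) ^+ 2 * (1 - Q ^+ 2 * y ^+ 2)).
rewrite -(mul0r c) -(eqP IH) /c /term_ratio; field.
by rewrite exprMn h1 h2 hx hQ.
Qed.

Lemma term_add2 n k : (k <= n)%N ->
  term n.+2 k = term n k * ((Q ^+ 2 * Q ^+ n - 1) * (Q * Q ^+ n - 1)
                            * (1 - Q * Q ^+ n * Q ^+ k) * (1 - Q ^+ 2 * Q ^+ n * Q ^+ k))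
     / ((Q ^+ 2 * Q ^+ n - Q ^+ k) * (Q * Q ^+ n - Q ^+ k)
        * (1 - Q * Q ^+ n) * (1 - Q ^+ 2 * Q ^+ n)).
Proof.
move=> le_kn; apply: (canRL (mulfK _)); last exact: term_add2_mul.
by rewrite !mulf_neq0 //; Qexp_neq.
Qed.

Lemma tsum_telescope_step n k : (k < n)%N ->
  (1 - Q ^+ 2 * Q ^+ n) ^+ 2 * term n.+2 k - Q * (1 - Q * Q ^+ n) ^+ 2 * term n k
  = certificate n k.+1 - certificate n k.
Proof.
move=> lt_kn; rewrite /certificate termS term_add2 1?ltnW // (exprS Q k).
have h1 : Q ^+ 2 * Q ^+ n - Q ^+ k != 0 by Qexp_neq.
have h2 : Q * Q ^+ n - Q ^+ k != 0 by Qexp_neq.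
have h3 : 1 - Q * Q ^+ n != 0 by Qexp_neq.
have h4 : 1 - Q ^+ 2 * Q ^+ n != 0 by Qexp_neq.
have h5 : Q ^+ k - Q * Q ^+ n != 0 by Qexp_neq.
have h6 : Q ^+ k - Q ^+ 2 * Q ^+ n != 0 by Qexp_neq.
have h7 : Q * Q ^+ k - Q * Q ^+ n != 0 by Qexp_neq.
have h8 : Q * Q ^+ k - Q ^+ 2 * Q ^+ n != 0 by Qexp_neq.
have h9 : 1 - Q * Q ^+ k != 0 by Qexp_neq.
have h10 : 1 - (Q * Q ^+ k) ^+ 2 != 0 by Qexp_neq.
move: h1 h2 h3 h4 h5 h6 h7 h8 h9 h10 (Qexp_neq0 n) (Qexp_neq0 k) Q_neq0.
set x := Q ^+ n; set y := Q ^+ k => h1 h2 h3 h4 h5 h6 h7 h8 h9 h10 hx hy hQ.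
rewrite /term_ratio /certificate_ratio; field.
by rewrite h1 h2 h3 h4 h5 h6 h7 h8 h9 h10 hx hy hQ.
Qed.

Lemma tsum_telescope_boundary n :
  (1 - Q ^+ 2 * Q ^+ n) ^+ 2 * (term n.+2 n + term n.+2 n.+1 + term n.+2 n.+2)
  - Q * (1 - Q * Q ^+ n) ^+ 2 * term n n + certificate n n = 0.
Proof.
rewrite /certificate !termS term_add2 // (exprS Q n) (exprD Q 2 n).
have h1 : Q ^+ 2 * Q ^+ n - Q ^+ n != 0 by Qexp_neq.
have h2 : Q * Q ^+ n - Q ^+ n != 0 by Qexp_neq.
have h3 : 1 - Q * Q ^+ n != 0 by Qexp_neq.
have h4 : 1 - Q ^+ 2 * Q ^+ n != 0 by Qexp_neq.
have h5 : Q ^+ n - Q * Q ^+ n != 0 by Qexp_neq.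
have h6 : Q ^+ n - Q ^+ 2 * Q ^+ n != 0 by Qexp_neq.
have h7 : 1 - (Q * Q ^+ n) ^+ 2 != 0 by Qexp_neq.
have h8 : 1 - (Q ^+ 2 * Q ^+ n) ^+ 2 != 0 by Qexp_neq.
move: h1 h2 h3 h4 h5 h6 h7 h8 (Qexp_neq0 n) Q_neq0.
set x := Q ^+ n => h1 h2 h3 h4 h5 h6 h7 h8 hx hQ.
rewrite /term_ratio /certificate_ratio; field.
by rewrite !mulrA -expr2 h1 h2 h3 h4 h5 h6 h7 h8 hx hQ.
Qed.

Lemma certificate0 n : certificate n 0 = 0.
Proof. by rewrite /certificate /certificate_ratio expr0 subrr expr0n !(mulr0, mul0r). Qed.

Lemma tsum_rec n :
  (1 - Q ^+ 2 * Q ^+ n) ^+ 2 * tsum n.+2 = Q * (1 - Q * Q ^+ n) ^+ 2 * tsum n.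
Proof.
have telescope : \sum_(k < n) ((1 - Q ^+ 2 * Q ^+ n) ^+ 2 * term n.+2 k
                               - Q * (1 - Q * Q ^+ n) ^+ 2 * term n k) = certificate n n.
  rewrite (eq_bigr (fun k : 'I_n => certificate n k.+1 - certificate n k)); last first.
    by move=> k _; apply: tsum_telescope_step.
  by rewrite -(big_mkord xpredT (fun k => certificate n k.+1 - certificate n k))
             telescope_sumr // certificate0 subr0.
move: telescope; rewrite sumrB -!mulr_sumr => telescope.
apply/eqP; rewrite -subr_eq0 -(tsum_telescope_boundary n) -telescope.
by rewrite /tsum !big_ord_recr /=; apply/eqP; ring.
Qed.

Definition central_ratio m := \prod_(i < m) ((1 - Q ^+ (2 * i + 1)) / (1 - Q ^+ (2 * i + 2))).

Lemma tsum_odd m : tsum (2 * m).+1 = 0.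
Proof.
elim: m => [|m IH].
  rewrite /tsum !big_ord_recr big_ord0 /= termS /term !big_ord0 /term_ratio !mul1r add0r.
  have h1 : 1 - Q != 0 by rewrite -(expr1 Q); Qexp_neq.
  have h2 : 1 - Q ^+ 2 != 0 by Qexp_neq.
  by rewrite !expr0 !expr1; field; rewrite h1 h2 Q_neq0.
have nz : (1 - Q ^+ 2 * Q ^+ (2 * m).+1) ^+ 2 != 0 by rewrite expf_neq0 //; Qexp_neq.
rewrite (_ : (2 * m.+1).+1 = (2 * m).+3)%N; last by lia.
by apply: (mulfI nz); rewrite tsum_rec IH !mulr0.
Qed.

Lemma tsum_even m : tsum (2 * m) = Q ^+ m * central_ratio m ^+ 2.
Proof.
elim: m => [|m IH].
  by rewrite /tsum big_ord_recr big_ord0 /= /term /central_ratio !big_ord0 add0r expr0 expr1n mulr1.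
have nz : 1 - Q ^+ 2 * Q ^+ (2 * m) != 0 by Qexp_neq.
rewrite (_ : 2 * m.+1 = (2 * m).+2)%N; last by lia.
apply: (mulfI (expf_neq0 2 nz)); rewrite tsum_rec IH /central_ratio big_ord_recr /=.
rewrite (exprD Q (2 * m) 1) (exprD Q (2 * m) 2) (exprS Q m).
move: nz; set x := Q ^+ (2 * m) => nz; field.
by rewrite mulrC nz.
Qed.

End TerminatingSum.

Section FractionDivisibility.
Variable m : {poly rat}.

(* [dvd_frac m r A]: [m ^+ r] divides [A] in the localisation of Q[q] away from [m];
   [qcongr m r A B] is [dvd_frac m r (A - B)] by definition, and [dvd_frac m 0 A]
   says that [A] has a denominator coprime to [m]. *)
Definition dvd_frac r (A : QF) := exists N D : {poly rat},
  [/\ D != 0, coprimep D m, (m ^+ r %| N)%R & A = tofrac N / tofrac D].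

Lemma dvd_frac_poly r N : (m ^+ r %| N)%R -> dvd_frac r (tofrac N).
Proof. by exists N, 1; rewrite oner_neq0 coprime1p tofrac1 divr1. Qed.

Lemma dvd_frac0 r : dvd_frac r 0.
Proof. by rewrite -tofrac0; apply: dvd_frac_poly; rewrite dvdp0. Qed.

Lemma dvd_frac_poly0 N : dvd_frac 0 (tofrac N).
Proof. by apply: dvd_frac_poly; rewrite expr0 dvd1p. Qed.

Lemma dvd_frac1 : dvd_frac 0 1.
Proof. by rewrite -tofrac1; apply: dvd_frac_poly0. Qed.

Lemma dvd_frac_inv D : D != 0 -> coprimep D m -> dvd_frac 0 (tofrac D)^-1.
Proof. by move=> nzD coDm; exists 1, D; rewrite expr0 dvd1p tofrac1 div1r. Qed.

Lemma dvd_fracD r A B : dvd_frac r A -> dvd_frac r B -> dvd_frac r (A + B).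
Proof.
move=> [N1 [D1 [nz1 co1 dv1 ->]]] [N2 [D2 [nz2 co2 dv2 ->]]].
exists (N1 * D2 + N2 * D1), (D1 * D2).
rewrite mulf_neq0 // coprimepMl co1 co2 dvdp_add ?dvdp_mulr // tofracD !tofracM.
by rewrite addf_div // tofrac_eq0.
Qed.

Lemma dvd_fracM r s A B : dvd_frac r A -> dvd_frac s B -> dvd_frac (r + s) (A * B).
Proof.
move=> [N1 [D1 [nz1 co1 dv1 ->]]] [N2 [D2 [nz2 co2 dv2 ->]]].
exists (N1 * N2), (D1 * D2).
by rewrite mulf_neq0 // coprimepMl co1 co2 exprD dvdp_mul // !tofracM mulf_div.
Qed.

Lemma dvd_fracN r A : dvd_frac r A -> dvd_frac r (- A).
Proof. by move=> [N [D [nzD coD dvN ->]]]; exists (- N), D; rewrite dvdpNr tofracN mulNr. Qed.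

Lemma dvd_fracB r A B : dvd_frac r A -> dvd_frac r B -> dvd_frac r (A - B).
Proof. by move=> dvA dvB; apply: dvd_fracD => //; apply: dvd_fracN. Qed.

Lemma dvd_fracMl r A B : dvd_frac 0 A -> dvd_frac r B -> dvd_frac r (A * B).
Proof. exact: dvd_fracM. Qed.

Lemma dvd_fracX A k : dvd_frac 0 A -> dvd_frac 0 (A ^+ k).
Proof.
move=> dvA; elim: k => [|k IH]; first by rewrite expr0; apply: dvd_frac1.
by rewrite exprS; apply: dvd_fracMl.
Qed.

Lemma dvd_frac_sum r k (f : nat -> QF) :
  (forall i, (i < k)%N -> dvd_frac r (f i)) -> dvd_frac r (\sum_(i < k) f i).
Proof.
move=> dvf; apply: big_ind => [|A B|i _]; [exact: dvd_frac0 | exact: dvd_fracD | exact: dvf].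
Qed.

Lemma dvd_frac_prod k (f : nat -> QF) :
  (forall i, (i < k)%N -> dvd_frac 0 (f i)) -> dvd_frac 0 (\prod_(i < k) f i).
Proof.
move=> dvf; apply: big_ind => [|A B|i _]; [exact: dvd_frac1 | exact: dvd_fracMl | exact: dvf].
Qed.

Lemma dvd_frac_prodB r k (f g : nat -> QF) :
  (forall i, (i < k)%N -> [/\ dvd_frac 0 (f i), dvd_frac 0 (g i) & dvd_frac r (f i - g i)]) ->
  dvd_frac r (\prod_(i < k) f i - \prod_(i < k) g i).
Proof.
elim: k => [|k IH] dvfg; first by rewrite !big_ord0 subrr; apply: dvd_frac0.
have [dvf dvg dvfg_k] := dvfg k (ltnSn k).
have IHk := IH (fun i lt_ik => dvfg i (ltnW lt_ik)).
rewrite !big_ord_recr /= (_ : forall a b c d : QF, a * c - b * d = a * (c - d) + (a - b) * d);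
  last by move=> a b c d; ring.
apply: dvd_fracD; first by apply: dvd_fracMl => //; apply: dvd_frac_prod => i /ltnW /dvfg [].
by rewrite mulrC; apply: dvd_fracMl.
Qed.

End FractionDivisibility.

Lemma qint_horner1 p : (qint p).[1] = p%:R.
Proof.
rewrite /qint horner_sum (eq_bigr (fun _ => 1)) ?sumr_const ?card_ord // => i _.
by rewrite hornerXn expr1n.
Qed.

Lemma dvdp_qint_subXn1 p v : qint p %| 'X^(p * v) - 1.
Proof. by rewrite exprM subrX1 subrX1; apply/dvdp_mulr/dvdp_mull. Qed.

Lemma coprimep_X_qint p : (0 < p)%N -> coprimep 'X (qint p).
Proof.
case: p => // p _; rewrite coprimep_sym -['X]subr0 -polyC0 coprimep_XsubC /root /qint.
rewrite horner_sum big_ord_recl big1 => [|i _]; last by rewrite hornerXn expr0n.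
by rewrite hornerXn expr0 addr0 oner_neq0.
Qed.

(* With [1 + a j = v p], a common divisor of [1 - q^j] and [[p]] divides
   [(q^(p v) - 1) - q (q^(j a) - 1) = q - 1], hence also [[p] - ([p] - p) = p]. *)
Lemma coprimep_1subXn_qint p j : (0 < p)%N -> coprime p j -> coprimep (1 - 'X^j) (qint p).
Proof.
move=> p_gt0 co_pj; have [a _] := Bezoutl j p_gt0; rewrite (eqP co_pj) => /dvdnP [v Ev].
apply/coprimepP => d dv_j dv_p.
have dv_ja : d %| 'X^(j * a) - 1.
  by rewrite exprM subrX1; apply: dvdp_mulr; rewrite -opprB dvdpNr.
have dv_X1 : d %| 'X - 1.
  have -> : 'X - 1 = ('X^(p * v) - 1) - 'X * ('X^(j * a) - 1) :> {poly rat}.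
    by rewrite mulrBr mulr1 -exprS (_ : (j * a).+1 = p * v)%N; [ring | lia].
  by rewrite dvdp_sub ?dvdp_mull // (dvdp_trans dv_p) ?dvdp_qint_subXn1.
have dv_pC : d %| (p%:R : rat)%:P.
  have : 'X - 1 %| qint p - (p%:R : rat)%:P.
    by rewrite -polyC1 dvdp_XsubCl /root hornerD hornerN hornerC qint_horner1 subrr.
  by move/(dvdp_trans dv_X1); rewrite dvdp_subr.
by apply: dvdp_eqp1 dv_pC _; rewrite polyC_eqp1 pnatr_eq0 -lt0n.
Qed.

Lemma qqX j : qq ^+ j = tofrac 'X^j.
Proof. by rewrite /qq tofracXn. Qed.

Lemma qqX_neq0 j : qq ^+ j != 0.
Proof. by rewrite qqX tofrac_eq0 -size_poly_eq0 size_polyXn. Qed.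

Lemma qq_neq0 : qq != 0.
Proof. by rewrite -(expr1 qq) qqX_neq0. Qed.

Lemma qqX_inj j k : j != k -> qq ^+ j != qq ^+ k.
Proof.
rewrite !qqX tofrac_eq; apply: contra_neq => /(congr1 (fun P : {poly rat} => size P)).
by rewrite !size_polyXn => -[].
Qed.

Lemma qqXX_inj s : (0 < s)%N -> forall a b : nat, a != b -> (qq ^+ s) ^+ a != (qq ^+ s) ^+ b.
Proof. by move=> s_gt0 a b neq_ab; rewrite -!exprM qqX_inj //; apply/eqP; nia. Qed.

Lemma subr1qqX_neq0 j : (0 < j)%N -> 1 - qq ^+ j != 0.
Proof. by move=> j_gt0; rewrite subr_eq0 -(expr0 qq) qqX_inj //; lia. Qed.

Lemma addr1qqX_neq0 j : 1 + qq ^+ j != 0.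
Proof.
rewrite qqX -tofrac1 -rmorphD tofrac_eq0; apply: contraTneq isT => /(congr1 (horner^~ 1)).
by rewrite /= hornerD hornerXn hornerC expr1n horner0 => /eqP.
Qed.

Definition qfact (x : QF) n := qpoch x x n.

Lemma qpochS a x k : qpoch a x k.+1 = qpoch a x k * (1 - a * x ^+ k).
Proof. by rewrite /qpoch big_ord_recr. Qed.

Lemma qpochD a x m n : qpoch a x (m + n) = qpoch a x m * qpoch (a * x ^+ m) x n.
Proof.
rewrite /qpoch big_split_ord; congr (_ * _).
by apply: eq_bigr => i _; rewrite exprD mulrA.
Qed.

Lemma qfact_neq0 a k : (0 < a)%N -> qfact (qq ^+ a) k != 0.
Proof.
move=> a_gt0; rewrite /qfact /qpoch prodf_seq_neq0; apply/allP => i _.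
by rewrite -exprS -exprM subr1qqX_neq0 // muln_gt0 a_gt0.
Qed.

Lemma qpochN_neq0 a k : qpoch (- qq ^+ a) (qq ^+ a) k != 0.
Proof.
rewrite /qpoch prodf_seq_neq0; apply/allP => i _.
by rewrite mulNr opprK -exprM -exprD addr1qqX_neq0.
Qed.

Lemma qbin_central x k : qfact x k != 0 -> qbin x (2 * k) k = qfact x (2 * k) / qfact x k ^+ 2.
Proof.
move=> nzk; rewrite /qbin leq_pmull // (_ : 2 * k - k + 1 = k.+1)%N; last by lia.
rewrite mul2n -addnn /qfact qpochD -exprS expr2 invfM mulrA [qpoch x x k * _]mulrC.
by rewrite (mulfK nzk).
Qed.

Definition summand k := qbin (qq ^+ 2) (2 * k) k ^+ 3 * qq ^+ (2 * k)
  / (qpoch (- qq ^+ 2) (qq ^+ 2) k ^+ 2 * qpoch (- qq) qq (2 * k) ^+ 2).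

Definition summand_ratio (F : fieldType) (q z : F) :=
  q ^+ 2 * (1 - q * z ^+ 2) ^+ 2 * (1 - q ^+ 2 * z ^+ 4)
  / ((1 - q ^+ 2 * z ^+ 2) ^+ 2 * (1 - q ^+ 4 * z ^+ 4)).

(* [summandS] in an abstract field: [A], [B], [C], [D] stand for the Pochhammer symbols
   of [summand k] and [z] for [q^k]. *)
Lemma summand_ratio_identity (F : fieldType) (q z A B C D : F) :
  B != 0 -> C != 0 -> D != 0 -> 1 - q ^+ 2 * z ^+ 2 != 0 -> 1 - q ^+ 4 * z ^+ 4 != 0 ->
  1 + q ^+ 2 * z ^+ 2 != 0 -> 1 + q * z ^+ 2 != 0 ->
  (A * (1 - q ^+ 2 * z ^+ 4) * (1 - q ^+ 2 * (q ^+ 2 * z ^+ 4))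
     / (B * (1 - q ^+ 2 * z ^+ 2)) ^+ 2) ^+ 3 * (q ^+ 2 * z ^+ 2)
  / ((C * (1 - - q ^+ 2 * z ^+ 2)) ^+ 2 * (D * (1 - - q * z ^+ 2) * (1 - - q * (q * z ^+ 2))) ^+ 2)
  = (A / B ^+ 2) ^+ 3 * z ^+ 2 / (C ^+ 2 * D ^+ 2) * summand_ratio q z.
Proof.
move=> nzB nzC nzD h1 h2 h3 h4; rewrite /summand_ratio; field.
by rewrite !exprMn nzB nzC nzD h1 h2 /= !mulNr !opprK mulrA -expr2 h3 h4.
Qed.

Ltac expr_lia := rewrite -!exprM -?exprD -?exprS; congr (_ ^+ _); lia.

Lemma summandS k : summand k.+1 = summand k * summand_ratio qq (qq ^+ k).
Proof.
rewrite /summand !qbin_central ?qfact_neq0 // (_ : 2 * k.+1 = (2 * k).+2)%N; last by lia.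
rewrite /qfact !qpochS.
rewrite (_ : (qq ^+ 2) ^+ (2 * k) = (qq ^+ k) ^+ 4); last by expr_lia.
rewrite (_ : (qq ^+ 2) ^+ (2 * k).+1 = qq ^+ 2 * (qq ^+ k) ^+ 4); last by expr_lia.
rewrite (_ : (qq ^+ 2) ^+ k = (qq ^+ k) ^+ 2); last by expr_lia.
rewrite (_ : qq ^+ (2 * k).+2 = qq ^+ 2 * (qq ^+ k) ^+ 2); last by expr_lia.
rewrite (_ : qq ^+ (2 * k).+1 = qq * (qq ^+ k) ^+ 2); last by expr_lia.
rewrite (_ : qq ^+ (2 * k) = (qq ^+ k) ^+ 2); last by expr_lia.
have nzB := qfact_neq0 k (isT : 0 < 2)%N; have nzC := qpochN_neq0 2 k.
have nzD : qpoch (- qq) qq (2 * k) != 0 by have := qpochN_neq0 1 (2 * k); rewrite expr1.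
have h1 : 1 - qq ^+ 2 * (qq ^+ k) ^+ 2 != 0 by rewrite -exprM -exprD subr1qqX_neq0.
have h2 : 1 - qq ^+ 4 * (qq ^+ k) ^+ 4 != 0 by rewrite -exprM -exprD subr1qqX_neq0.
have h3 : 1 + qq ^+ 2 * (qq ^+ k) ^+ 2 != 0 by rewrite -exprM -exprD addr1qqX_neq0.
have h4 : 1 + qq * (qq ^+ k) ^+ 2 != 0 by rewrite -exprM -exprS addr1qqX_neq0.
exact: (summand_ratio_identity (qpoch (qq ^+ 2) (qq ^+ 2) (2 * k)) nzB nzC nzD h1 h2 h3 h4).
Qed.

Lemma summand_prod k : summand k = \prod_(i < k) summand_ratio qq (qq ^+ i).
Proof.
elim: k => [|k IH]; last by rewrite big_ord_recr -IH summandS.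
by rewrite big_ord0 /summand /qbin /= /qpoch !big_ord0 !(expr1n, divr1, mulr1).
Qed.

(* The inductive step of [qbin_qpochN_central] in an abstract field, [z] standing for [q^m]. *)
Lemma central_ratio_identity (F : fieldType) (q z A B C : F) :
  B != 0 -> C != 0 -> 1 - q ^+ 4 * z ^+ 4 != 0 -> 1 + q ^+ 2 * z ^+ 4 != 0 ->
  1 + q ^+ 4 * z ^+ 4 != 0 ->
  A * (1 - q ^+ 4 * z ^+ 8) * (1 - q ^+ 4 * (q ^+ 4 * z ^+ 8)) / (B * (1 - q ^+ 4 * z ^+ 4)) ^+ 2
    / (C * (1 - - q ^+ 2 * z ^+ 4) * (1 - - q ^+ 2 * (q ^+ 2 * z ^+ 4)))
  = A / B ^+ 2 / C * ((1 - q ^+ 2 * z ^+ 4) / (1 - q ^+ 4 * z ^+ 4)).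
Proof.
move=> nzB nzC h1 h2 h3; field.
by rewrite !exprMn nzB nzC h1 /= !mulNr !opprK mulrA -exprD h2 h3.
Qed.

Lemma qbin_qpochN_central m :
  qbin (qq ^+ 4) (2 * m) m / qpoch (- qq ^+ 2) (qq ^+ 2) (2 * m) = central_ratio (qq ^+ 2) m.
Proof.
elim: m => [|m IH].
  by rewrite /central_ratio /qbin /= /qpoch !big_ord0 !divr1.
rewrite /central_ratio big_ord_recr /= -/(central_ratio _ _) -IH !qbin_central ?qfact_neq0 //.
rewrite (_ : 2 * m.+1 = (2 * m).+2)%N; last by lia.
rewrite /qfact !qpochS.
rewrite (_ : (qq ^+ 4) ^+ (2 * m) = (qq ^+ m) ^+ 8); last by expr_lia.
rewrite (_ : (qq ^+ 4) ^+ (2 * m).+1 = qq ^+ 4 * (qq ^+ m) ^+ 8); last by expr_lia.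
rewrite (_ : (qq ^+ 4) ^+ m = (qq ^+ m) ^+ 4); last by expr_lia.
rewrite (_ : (qq ^+ 2) ^+ (2 * m) = (qq ^+ m) ^+ 4); last by expr_lia.
rewrite (_ : (qq ^+ 2) ^+ (2 * m).+1 = qq ^+ 2 * (qq ^+ m) ^+ 4); last by expr_lia.
rewrite (_ : (qq ^+ 2) ^+ (2 * m + 1) = qq ^+ 2 * (qq ^+ m) ^+ 4); last by expr_lia.
rewrite (_ : (qq ^+ 2) ^+ (2 * m + 2) = qq ^+ 4 * (qq ^+ m) ^+ 4); last by expr_lia.
have nzB := qfact_neq0 m (isT : 0 < 4)%N; have nzC := qpochN_neq0 2 (2 * m).
have h1 : 1 - qq ^+ 4 * (qq ^+ m) ^+ 4 != 0 by rewrite -exprM -exprD subr1qqX_neq0.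
have h2 : 1 + qq ^+ 2 * (qq ^+ m) ^+ 4 != 0 by rewrite -exprM -exprD addr1qqX_neq0.
have h3 : 1 + qq ^+ 4 * (qq ^+ m) ^+ 4 != 0 by rewrite -exprM -exprD addr1qqX_neq0.
exact: (central_ratio_identity (qpoch (qq ^+ 4) (qq ^+ 4) (2 * m)) nzB nzC h1 h2 h3).
Qed.

(* The two ratios differ by a multiple of [(q w^2 - 1)^2]; with [w = q^n] this is
   [(q^p - 1)^2] for [p = 2 n + 1]. *)
Lemma summand_ratio_subr_term_ratio (F : fieldType) (q w z : F) :
  q != 0 -> w != 0 -> 1 - q ^+ 2 * z ^+ 2 != 0 -> 1 - q ^+ 4 * z ^+ 4 != 0 ->
  summand_ratio q z - term_ratio (q ^+ 2) (w ^+ 2) (z ^+ 2)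
  = (q * w ^+ 2 - 1) ^+ 2 * (q * z ^+ 2 * (1 - q ^+ 2 * z ^+ 4) * q ^+ 2
      * ((1 - q ^+ 2 * z ^+ 2)^-1) ^+ 2 * (1 - q ^+ 4 * z ^+ 4)^-1 * q^-1 * (w^-1) ^+ 2).
Proof.
move=> nzq nzw h1 h2; rewrite /summand_ratio /term_ratio; field.
by rewrite !exprMn h1 h2 nzw ?nzq.
Qed.

Lemma term_ratio_sqr (F : fieldType) (q w z : F) :
  q != 0 -> w != 0 -> 1 - q ^+ 2 * z ^+ 2 != 0 -> 1 - q ^+ 4 * z ^+ 4 != 0 ->
  term_ratio (q ^+ 2) (w ^+ 2) (z ^+ 2)
  = q ^+ 2 * (w ^+ 2 - z ^+ 2) * (1 - q ^+ 2 * w ^+ 2 * z ^+ 2) * (1 - q ^+ 2 * z ^+ 4)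
    * (w^-1) ^+ 2 * ((1 - q ^+ 2 * z ^+ 2)^-1) ^+ 2 * (1 - q ^+ 4 * z ^+ 4)^-1.
Proof.
move=> nzq nzw h1 h2; rewrite /term_ratio; field.
by rewrite !exprMn h1 h2 nzw ?nzq.
Qed.

Section ModuloQint.
Variables p n : nat.
Hypotheses (p_prime : prime p) (p_eq : p = (2 * n + 1)%N).
Local Notation m := (qint p).

Lemma dvd_frac_qqX k : dvd_frac m 0 (qq ^+ k).
Proof. by rewrite qqX; apply: dvd_frac_poly0. Qed.

Lemma dvd_frac_qqXV k : dvd_frac m 0 (qq ^+ k)^-1.
Proof.
rewrite -exprVn; apply: dvd_fracX; apply: dvd_frac_inv.
  by rewrite -size_poly_eq0 size_polyX.
exact/coprimep_X_qint/prime_gt0.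
Qed.

Lemma dvd_frac_subr1qqXV j : (0 < j < 2 * p)%N -> ~~ odd j -> dvd_frac m 0 (1 - qq ^+ j)^-1.
Proof.
move=> /andP [j_gt0 lt_j2p] even_j; rewrite qqX -tofrac1 -rmorphB.
apply: dvd_frac_inv; first by rewrite -tofrac_eq0 rmorphB /= tofrac1 -qqX subr1qqX_neq0.
apply: coprimep_1subXn_qint; first exact: prime_gt0.
rewrite prime_coprime //; apply/negP => /dvdnP [t j_eq].
move: even_j; rewrite j_eq (_ : t = 1)%N; last by nia.
by rewrite mul1n p_eq oddD oddM.
Qed.

Lemma dvd_frac_qq : dvd_frac m 0 qq.
Proof. exact: dvd_frac_poly0. Qed.

Lemma dvd_frac_qqV : dvd_frac m 0 qq^-1.
Proof. by rewrite -(expr1 qq); apply: dvd_frac_qqXV. Qed.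

Ltac coprime_den := repeat first [ assumption | apply: dvd_frac1 | apply: dvd_frac_qq | apply: dvd_frac_qqV
  | apply: dvd_frac_qqX | apply: dvd_frac_qqXV
  | apply: dvd_fracMl | apply: dvd_fracB | apply: dvd_fracX ].

Lemma summand_ratio_congr i : (i < n)%N ->
  [/\ dvd_frac m 0 (summand_ratio qq (qq ^+ i)),
      dvd_frac m 0 (term_ratio (qq ^+ 2) ((qq ^+ 2) ^+ n) ((qq ^+ 2) ^+ i))
    & dvd_frac m 2 (summand_ratio qq (qq ^+ i)
                    - term_ratio (qq ^+ 2) ((qq ^+ 2) ^+ n) ((qq ^+ 2) ^+ i))].
Proof.
move=> lt_in.
have dv1 : dvd_frac m 0 (1 - qq ^+ 2 * (qq ^+ i) ^+ 2)^-1.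
  rewrite -exprM -exprD; apply: dvd_frac_subr1qqXV; first by apply/andP; split; lia.
  by rewrite oddD oddM andbF.
have dv2 : dvd_frac m 0 (1 - qq ^+ 4 * (qq ^+ i) ^+ 4)^-1.
  rewrite -exprM -exprD; apply: dvd_frac_subr1qqXV; first by apply/andP; split; lia.
  by rewrite oddD oddM andbF.
have h1 : 1 - qq ^+ 2 * (qq ^+ i) ^+ 2 != 0 by rewrite -exprM -exprD subr1qqX_neq0.
have h2 : 1 - qq ^+ 4 * (qq ^+ i) ^+ 4 != 0 by rewrite -exprM -exprD subr1qqX_neq0.
have nzqi := qqX_neq0 n.
rewrite !(exprAC qq 2); split.
- by rewrite /summand_ratio invfM -exprVn; coprime_den.
- by rewrite (term_ratio_sqr qq_neq0 nzqi h1 h2); coprime_den.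
rewrite (summand_ratio_subr_term_ratio qq_neq0 nzqi h1 h2).
rewrite mulrC; apply: dvd_fracMl; first by coprime_den.
rewrite -exprM -exprS (_ : (n * 2).+1 = p); last by lia.
rewrite qqX -tofrac1 -rmorphB -rmorphXn; apply: dvd_frac_poly.
by apply: dvdp_exp2r; rewrite subrX1 dvdp_mull.
Qed.

End ModuloQint.

Lemma qcongr_dvd_frac m r A B : dvd_frac m r (A - B) -> qcongr m r A B.
Proof. by []. Qed.

Lemma tsum_qq2_closed p : odd p ->
  (if (p %% 4 == 1)%N then
     qq ^+ ((p - 1) %/ 2) * qbin (qq ^+ 4) ((p - 1) %/ 2) ((p - 1) %/ 4) ^+ 2
     / qpoch (- qq ^+ 2) (qq ^+ 2) ((p - 1) %/ 2) ^+ 2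
   else 0) = tsum (qq ^+ 2) ((p - 1) %/ 2).
Proof.
move=> odd_p; have p_mod2 : (p %% 2 = 1)%N by rewrite modn2 odd_p.
case: ifP => [/eqP p_mod4 | /negbT p_mod4].
  rewrite (_ : (p - 1) %/ 2 = 2 * ((p - 1) %/ 4))%N; last by lia.
  by rewrite (tsum_even (qqXX_inj _)) // -qbin_qpochN_central expr_div_n -exprM -mulrA.
by rewrite (_ : (p - 1) %/ 2 = (2 * ((p - 1) %/ 4)).+1)%N ?(tsum_odd (qqXX_inj _)) //; lia.
Qed.

Theorem corollary2p2 (p : nat) (hp : prime p) (hodd : odd p) :
  qcongr (qint p) 2
    (\sum_(k < (p - 1) %/ 2 + 1)
        qbin (qq ^+ 2) (2 * k) k ^+ 3 * qq ^+ (2 * k)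
        / (qpoch (- qq ^+ 2) (qq ^+ 2) k ^+ 2 * qpoch (- qq) qq (2 * k) ^+ 2))
    (if (p %% 4 == 1)%N then
       qq ^+ ((p - 1) %/ 2) * qbin (qq ^+ 4) ((p - 1) %/ 2) ((p - 1) %/ 4) ^+ 2
       / qpoch (- qq ^+ 2) (qq ^+ 2) ((p - 1) %/ 2) ^+ 2
     else 0).
Proof.
rewrite tsum_qq2_closed //; set n := ((p - 1) %/ 2)%N.
have p_mod2 : (p %% 2 = 1)%N by rewrite modn2 hodd.
have p_eq : p = (2 * n + 1)%N by rewrite /n; lia.
apply: qcongr_dvd_frac; rewrite /tsum addn1 -sumrB.
apply: (dvd_frac_sum (f := fun k => summand k - term (qq ^+ 2) n k)) => k lt_kn.
rewrite summand_prod /term.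
apply: (dvd_frac_prodB (f := fun i => summand_ratio qq (qq ^+ i))
                       (g := fun i => term_ratio (qq ^+ 2) ((qq ^+ 2) ^+ n) ((qq ^+ 2) ^+ i))).
move=> i lt_ik.
apply: (summand_ratio_congr hp p_eq); lia.
Qed.
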